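(* Assume $N\ge3$. If $M>0$ and $1<p\le\frac{N+2}{N-2}$, system (S) admits no closed orbit (nonconstant periodic trajectory) contained in the closed quadrant $\{x\ge0,y\ge0\}$. If $p>\frac{N+2}{N-2}$ and $0<M\le\overline M$, system (S) admits no cycle in the open quadrant $\{x>0,y>0\}$ surrounding $P_M$.
   Context: Let $K=\frac{(N-2)p-N}{p-1}$. System (S) is $x_t=\frac{2}{p-1}x-y$, $y_t=-Ky+|x|^{p-1}x+M|y|^{\frac{2p}{p+1}}$. For $p>\frac{N}{N-2}$, $M\ge0$, $X_M$ is the unique positive root of $X^{p-1}+M\left(\frac{2}{p-1}\right)^{\frac{2p}{p+1}}X^{\frac{p-1}{p+1}}-\frac{2K}{p-1}=0$ and $P_M=(X_M,\frac{2}{p-1}X_M)$. $\overline M=\frac{(p+1)((N-2)p-N-2)}{(4p)^{\frac{p}{p+1}}((N-2)(p-1)^2+4)^{\frac{1}{p+1}}}$. A cycle surrounding $P_M$ is a nonconstant periodic orbit whose bounded complementary region contains $P_M$. *)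

From Stdlib Require Import Reals.
Open Scope R_scope.

(* a^e for a >= 0 and exponent e > 0, with the convention 0^e = 0
   (Stdlib's Rpower 0 e evaluates to 1, so we guard it). *)
Definition powp (a e : R) : R := if Rlt_dec 0 a then Rpower a e else 0.

Definition Kc (N p : R) : R := ((N - 2) * p - N) / (p - 1).

Definition fS1 (p : R) (x y : R) : R := 2 / (p - 1) * x - y.
Definition fS2 (N p M : R) (x y : R) : R :=
  - Kc N p * y + powp (Rabs x) (p - 1) * x + M * powp (Rabs y) (2 * p / (p + 1)).

Definition solS (N p M : R) (x y : R -> R) : Prop :=
  forall t, derivable_pt_lim x t (fS1 p (x t) (y t)) /\
            derivable_pt_lim y t (fS2 N p M (x t) (y t)).

Definition periodic_orbit (N p M : R) (x y : R -> R) : Prop :=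
  solS N p M x y /\
  (exists T, 0 < T /\ forall t, x (t + T) = x t /\ y (t + T) = y t) /\
  (exists t1 t2, x t1 <> x t2 \/ y t1 <> y t2).

Definition on_orbit (x y : R -> R) (a b : R) : Prop :=
  exists t, a = x t /\ b = y t.

(* The point (a,b) is off the orbit and lies in a bounded component of its
   complement: every continuous path starting at (a,b) and avoiding the orbit
   on [0,1] ends inside a fixed ball. *)
Definition surrounds (x y : R -> R) (a b : R) : Prop :=
  ~ on_orbit x y a b /\
  exists B, forall g1 g2 : R -> R,
    continuity g1 -> continuity g2 -> g1 0 = a -> g2 0 = b ->
    (forall s, 0 <= s <= 1 -> ~ on_orbit x y (g1 s) (g2 s)) ->
    g1 1 ^ 2 + g2 1 ^ 2 <= B.

Definition is_XM (N p M X : R) : Prop :=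
  0 < X /\
  powp X (p - 1) + M * powp (2 / (p - 1)) (2 * p / (p + 1)) * powp X ((p - 1) / (p + 1))
  - 2 * Kc N p / (p - 1) = 0.

Definition Mbar (N p : R) : R :=
  (p + 1) * ((N - 2) * p - N - 2) /
  (powp (4 * p) (p / (p + 1)) * powp ((N - 2) * (p - 1) ^ 2 + 4) (1 / (p + 1))).

(* Both statements come from Lyapunov functions [V] whose derivative along (S) has the form
   [(y - a x) G(x, y)] with [a = 2/(p-1)], is nonpositive, and vanishes only on the nullcline
   [y = a x] of [x' = 0]; along a periodic orbit this derivative must vanish identically, which
   pins the orbit to the nullcline, where [x' = 0] makes it constant.
   For [p <= (N+2)/(N-2)] an energy-type function works on the closed quadrant, because then
   [2/(p-1) >= K].  For [p > (N+2)/(N-2)] the function [lyap_super] below works on the open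
   quadrant: its factor [J x y] vanishes at [y = a x] and is strictly decreasing in [y] as soon
   as [M (q - b) <= kappa], by a weighted AM-GM inequality. *)

From Stdlib Require Import Reals Lra Psatz.
Open Scope R_scope.

Lemma derivable_pt_lim_cst c t : derivable_pt_lim (fun _ => c) t 0.
Proof. exact (derivable_pt_lim_const c t). Qed.

Lemma derivable_pt_lim_add f g t a b :
  derivable_pt_lim f t a -> derivable_pt_lim g t b ->
  derivable_pt_lim (fun s => f s + g s) t (a + b).
Proof. exact (derivable_pt_lim_plus f g t a b). Qed.

Lemma derivable_pt_lim_sub f g t a b :
  derivable_pt_lim f t a -> derivable_pt_lim g t b ->
  derivable_pt_lim (fun s => f s - g s) t (a - b).
Proof. exact (derivable_pt_lim_minus f g t a b). Qed.

Lemma derivable_pt_lim_neg f t a :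
  derivable_pt_lim f t a -> derivable_pt_lim (fun s => - f s) t (- a).
Proof. exact (derivable_pt_lim_opp f t a). Qed.

Lemma derivable_pt_lim_mul f g t a b :
  derivable_pt_lim f t a -> derivable_pt_lim g t b ->
  derivable_pt_lim (fun s => f s * g s) t (a * g t + f t * b).
Proof. exact (derivable_pt_lim_mult f g t a b). Qed.

Lemma derivable_pt_lim_Rpower_comp f t l e :
  0 < f t -> derivable_pt_lim f t l ->
  derivable_pt_lim (fun s => Rpower (f s) e) t (e * Rpower (f t) (e - 1) * l).
Proof.
  intros hf hd.
  apply (derivable_pt_lim_comp f (fun u => Rpower u e)); [exact hd |].
  now apply derivable_pt_lim_power.
Qed.

Lemma derivable_pt_lim_eq_value f t l l' :
  derivable_pt_lim f t l -> l = l' -> derivable_pt_lim f t l'.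
Proof. now intros ? <-. Qed.

Lemma derivable_pt_lim_eq_loc f g t l r :
  0 < r -> (forall s, Rabs (s - t) < r -> f s = g s) ->
  derivable_pt_lim g t l -> derivable_pt_lim f t l.
Proof.
  intros hr hfg hg eps heps.
  destruct (hg eps heps) as [d hd].
  assert (hm : 0 < Rmin d r) by (apply Rmin_glb_lt; [apply cond_pos | exact hr]).
  exists (mkposreal _ hm); simpl; intros h hh0 hh.
  assert (hd' : Rabs h < d) by (eapply Rlt_le_trans; [exact hh | apply Rmin_l]).
  assert (hr' : Rabs h < r) by (eapply Rlt_le_trans; [exact hh | apply Rmin_r]).
  rewrite (hfg (t + h)), (hfg t).
  - now apply hd.
  - now rewrite Rminus_diag, Rabs_R0.
  - now replace (t + h - t) with h by ring.
Qed.

Lemma nonincreasing_of_derivative_nonpos f f' :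
  (forall t, derivable_pt_lim f t (f' t)) -> (forall t, f' t <= 0) ->
  forall s u, s <= u -> f u <= f s.
Proof.
  intros hd hneg s u hsu.
  destruct (Rle_lt_or_eq_dec _ _ hsu) as [hlt | ->]; [| lra].
  destruct (MVT_cor2 f f' s u hlt (fun c _ => hd c)) as [c [hc _]].
  specialize (hneg c); nra.
Qed.

Lemma constant_of_derivative_zero f :
  (forall t, derivable_pt_lim f t 0) -> forall s u, f s = f u.
Proof.
  intros hd.
  assert (hle : forall s u, s <= u -> f u = f s).
  { intros s u hsu.
    pose proof (nonincreasing_of_derivative_nonpos f (fun _ => 0) hd
                  (fun _ => Rle_refl 0) s u hsu).
    assert (hopp : forall t, derivable_pt_lim (fun t => - f t) t 0).
    { intro t; rewrite <- Ropp_0; now apply derivable_pt_lim_neg. }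
    pose proof (nonincreasing_of_derivative_nonpos _ (fun _ => 0) hopp
                  (fun _ => Rle_refl 0) s u hsu).
    lra. }
  intros s u; destruct (Rle_dec s u); [symmetry; auto | apply hle; lra].
Qed.

(* A nonincreasing periodic function is locally constant, so its derivative vanishes. *)
Lemma periodic_derivative_nonpos_eq0 W w T t0 :
  0 < T -> (forall t, derivable_pt_lim W t (w t)) -> (forall t, w t <= 0) ->
  (forall t, W (t + T) = W t) -> w t0 = 0.
Proof.
  intros hT hd hneg hper.
  pose proof (nonincreasing_of_derivative_nonpos W w hd hneg) as mono.
  assert (hback : W (t0 - T) = W t0).
  { rewrite <- (hper (t0 - T)); f_equal; ring. }
  assert (hloc : forall s, Rabs (s - t0) < T -> W s = W t0).
  { intros s hs; apply Rabs_def2 in hs.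
    destruct (Rle_dec s t0).
    - pose proof (mono (t0 - T) s ltac:(lra)); pose proof (mono s t0 ltac:(lra)); lra.
    - pose proof (mono t0 s ltac:(lra)); pose proof (mono s (t0 + T) ltac:(lra));
        rewrite hper in *; lra. }
  apply (uniqueness_limite W t0); [apply hd |].
  apply (derivable_pt_lim_eq_loc W (fun _ => W t0) t0 0 T hT hloc).
  apply derivable_pt_lim_cst.
Qed.

Lemma strictly_decreasing_of_derivative g g' lo hi :
  lo < hi -> (forall s, lo <= s <= hi -> derivable_pt_lim g s (g' s)) ->
  (forall s, lo <= s <= hi -> g' s <= 0) ->
  (forall s1 s2, lo <= s1 <= hi -> lo <= s2 <= hi -> g' s1 = 0 -> g' s2 = 0 -> s1 = s2) ->
  g hi < g lo.
Proof.
  intros hlh hd hneg huniq; set (m := (lo + hi) / 2).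
  destruct (MVT_cor2 g g' lo m) as [c1 [e1 hc1]];
    [unfold m; lra | intros c hc; apply hd; unfold m in hc; lra |].
  destruct (MVT_cor2 g g' m hi) as [c2 [e2 hc2]];
    [unfold m; lra | intros c hc; apply hd; unfold m in hc; lra |].
  unfold m in *.
  assert (h1 : g' c1 <= 0) by (apply hneg; lra).
  assert (h2 : g' c2 <= 0) by (apply hneg; lra).
  destruct (Req_dec (g' c1) 0) as [z1 | z1]; [destruct (Req_dec (g' c2) 0) as [z2 | z2] |].
  - pose proof (huniq c1 c2 ltac:(lra) ltac:(lra) z1 z2); lra.
  - assert (g' c2 * (hi - (lo + hi) / 2) < 0) by (apply Rmult_neg_pos; lra); nra.
  - assert (g' c1 * ((lo + hi) / 2 - lo) < 0) by (apply Rmult_neg_pos; lra); nra.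
Qed.

Lemma Rpower_pos z e : 0 < Rpower z e.
Proof. apply exp_pos. Qed.

Lemma Rpower_2 z : 0 < z -> Rpower z 2 = z * z.
Proof.
  intro hz; replace 2 with (1 + 1) by ring; now rewrite Rpower_plus, Rpower_1.
Qed.

Lemma powp_pos u e : 0 < u -> powp u e = Rpower u e.
Proof. intro hu; unfold powp; destruct (Rlt_dec 0 u); [reflexivity | lra]. Qed.

Lemma powp_nonpos u e : u <= 0 -> powp u e = 0.
Proof. intro hu; unfold powp; destruct (Rlt_dec 0 u); [lra | reflexivity]. Qed.

Lemma powp_succ u e : 0 <= u -> powp u (e + 1) = powp u e * u.
Proof.
  intro hu; destruct (Rle_lt_or_eq_dec _ _ hu) as [hpos | <-].
  - now rewrite !powp_pos, Rpower_plus, Rpower_1.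
  - rewrite !powp_nonpos by lra; ring.
Qed.

Lemma powp_lt u v e : 0 < e -> 0 <= u < v -> powp u e < powp v e.
Proof.
  intros he [hu huv]; rewrite (powp_pos v) by lra.
  destruct (Rle_lt_or_eq_dec _ _ hu) as [hpos | <-].
  - rewrite powp_pos by lra; now apply Rlt_Rpower_l.
  - rewrite powp_nonpos by lra; apply Rpower_pos.
Qed.

Lemma derivable_pt_lim_powp e u :
  1 < e -> derivable_pt_lim (fun v => powp v e) u (e * powp u (e - 1)).
Proof.
  intro he; destruct (Rtotal_order u 0) as [hu | [-> | hu]].
  - rewrite powp_nonpos, Rmult_0_r by lra.
    apply (derivable_pt_lim_eq_loc _ (fun _ => 0) u 0 (- u)); [lra | | apply derivable_pt_lim_cst].
    intros s hs; apply Rabs_def2 in hs; apply powp_nonpos; lra.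
  - rewrite powp_nonpos, Rmult_0_r by lra.
    intros eps heps.
    (* for 0 < h < d the difference quotient is h^(e-1) < d^(e-1) = eps *)
    set (d := Rpower eps (/ (e - 1))).
    assert (hd : Rpower d (e - 1) = eps).
    { unfold d; rewrite Rpower_mult, Rinv_l, Rpower_1 by lra; reflexivity. }
    exists (mkposreal d (Rpower_pos _ _)); simpl; intros h hh0 hh.
    rewrite Rplus_0_l, (powp_nonpos 0), !Rminus_0_r by lra.
    destruct (Rlt_dec 0 h) as [hpos | hneg].
    + rewrite powp_pos by lra; rewrite Rabs_pos_eq in hh by lra.
      replace (Rpower h e / h) with (Rpower h (e - 1)).
      * rewrite Rabs_pos_eq by (left; apply Rpower_pos).
        rewrite <- hd; apply Rlt_Rpower_l; lra.
      * replace e with (e - 1 + 1) at 2 by ring.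
        rewrite Rpower_plus, Rpower_1 by lra; field; lra.
    + rewrite powp_nonpos by lra; unfold Rdiv; rewrite Rmult_0_l, Rabs_R0; lra.
  - rewrite powp_pos by lra.
    apply (derivable_pt_lim_eq_loc _ (fun v => Rpower v e) u _ u); [lra | |].
    + intros s hs; apply Rabs_def2 in hs; apply powp_pos; lra.
    + now apply derivable_pt_lim_power.
Qed.

Lemma derivable_pt_lim_powp_comp f t l e :
  1 < e -> derivable_pt_lim f t l ->
  derivable_pt_lim (fun s => powp (f s) e) t (e * powp (f t) (e - 1) * l).
Proof.
  intros he hd.
  apply (derivable_pt_lim_comp f (fun v => powp v e)); [exact hd |].
  now apply derivable_pt_lim_powp.
Qed.

Lemma powp_mul u v e : 0 <= u -> 0 <= v -> powp u e * powp v e = powp (u * v) e.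
Proof.
  intros hu hv.
  destruct (Rle_lt_or_eq_dec _ _ hu) as [hu' | <-];
    [| rewrite Rmult_0_l, powp_nonpos by lra; ring].
  destruct (Rle_lt_or_eq_dec _ _ hv) as [hv' | <-];
    [| rewrite Rmult_0_r, (powp_nonpos 0) by lra; ring].
  rewrite !powp_pos by nra; now apply Rpower_mult_distr.
Qed.

Ltac derive :=
  unfold Rdiv;
  repeat first
    [ apply derivable_pt_lim_cst
    | apply derivable_pt_lim_add
    | apply derivable_pt_lim_sub
    | apply derivable_pt_lim_neg
    | apply derivable_pt_lim_mul
    | apply derivable_pt_lim_power; assumption
    | apply derivable_pt_lim_Rpower_comp; [nra |]
    | apply derivable_pt_lim_powp_comp; [lra | eassumption]
    | eassumption ].

Ltac rpower_normalize :=
  rewrite <- ?Rpower_mult_distr by nra;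
  unfold Rminus;
  rewrite ?Rpower_plus, ?Rpower_Ropp, ?Rpower_1, ?Rpower_2 by nra.

Ltac field_rpower :=
  field; repeat split; try (apply Rgt_not_eq, Rpower_pos); lra.

Lemma ln_tangent_le G X : 0 < G -> 0 < X -> G * (1 + (ln X - ln G)) <= X.
Proof.
  intros hG hX; pose proof (exp_ineq1_le (ln X - ln G)) as h.
  unfold Rminus in h; rewrite exp_plus, exp_Ropp, !exp_ln in h by assumption.
  apply (Rmult_le_compat_l G) in h; [| lra].
  now replace (G * (X * / G)) with X in h by (field; lra).
Qed.

Lemma ln_tangent_lt G X : 0 < G -> 0 < X -> X <> G -> G * (1 + (ln X - ln G)) < X.
Proof.
  intros hG hX hXG.
  assert (hne : ln X - ln G <> 0) by (intro h; apply hXG, ln_inv; lra).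
  pose proof (exp_ineq1 _ hne) as h.
  unfold Rminus in h; rewrite exp_plus, exp_Ropp, !exp_ln in h by assumption.
  apply (Rmult_lt_compat_l G) in h; [| lra].
  now replace (G * (X * / G)) with X in h by (field; lra).
Qed.

Lemma weighted_amgm_lt w U V : 0 < w < 1 -> 0 < U -> 0 < V -> U <> V ->
  Rpower U w * Rpower V (1 - w) < w * U + (1 - w) * V.
Proof.
  intros hw hU hV hUV; set (G := Rpower U w * Rpower V (1 - w)).
  assert (hG : 0 < G) by (apply Rmult_lt_0_compat; apply Rpower_pos).
  assert (hlnG : ln G = w * ln U + (1 - w) * ln V)
    by (unfold G; rewrite ln_mult, !ln_Rpower by apply Rpower_pos; reflexivity).
  pose proof (ln_tangent_le G U hG hU); pose proof (ln_tangent_le G V hG hV).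
  assert (w * (G * (1 + (ln U - ln G))) + (1 - w) * (G * (1 + (ln V - ln G))) = G)
    by (rewrite hlnG; ring).
  destruct (Req_dec U G) as [hUG | hUG].
  - assert (hVG : V <> G) by congruence.
    pose proof (ln_tangent_lt G V hG hV hVG); nra.
  - pose proof (ln_tangent_lt G U hG hU hUG); nra.
Qed.

Lemma weighted_amgm w U V : 0 < w < 1 -> 0 < U -> 0 < V ->
  Rpower U w * Rpower V (1 - w) <= w * U + (1 - w) * V.
Proof.
  intros hw hU hV; destruct (Req_dec U V) as [<- | hUV].
  - rewrite <- Rpower_plus; replace (w + (1 - w)) with 1 by ring.
    rewrite Rpower_1 by lra; right; ring.
  - left; now apply weighted_amgm_lt.
Qed.

Lemma periodic_orbit_no_strict_lyapunov N p M x y (V : R -> R -> R) (G : R -> R) :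
  periodic_orbit N p M x y ->
  (forall t, derivable_pt_lim (fun s => V (x s) (y s)) t
                                ((y t - 2 / (p - 1) * x t) * G t)) ->
  (forall t, y t <> 2 / (p - 1) * x t -> (y t - 2 / (p - 1) * x t) * G t < 0) ->
  False.
Proof.
  intros [hsol [[T [hT hper]] [t1 [t2 hne]]]] hV hsign.
  set (a := 2 / (p - 1)) in *.
  assert (hnonpos : forall t, (y t - a * x t) * G t <= 0).
  { intro t; destruct (Req_dec (y t) (a * x t)) as [-> | hoff].
    - lra.
    - now left; apply hsign. }
  assert (hnull : forall t, y t = a * x t).
  { intro t; destruct (Req_dec (y t) (a * x t)) as [| hoff]; [assumption |].
    pose proof (hsign t hoff).
    enough ((y t - a * x t) * G t = 0) by lra.
    apply (periodic_derivative_nonpos_eq0 (fun s => V (x s) (y s)) _ T t hT hV hnonpos).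
    intro s; destruct (hper s) as [-> ->]; reflexivity. }
  assert (hx : forall t, derivable_pt_lim x t 0).
  { intro t; apply (derivable_pt_lim_eq_value _ _ _ _ (proj1 (hsol t))).
    unfold fS1; fold a; rewrite hnull; ring. }
  pose proof (constant_of_derivative_zero x hx t1 t2) as hx12.
  destruct hne as [hne | hne]; apply hne; [| rewrite !hnull]; congruence.
Qed.

Definition lyap_sub (a K M p q u v : R) : R :=
  a * u * v - v * v / 2 - powp u (p + 1) / (p + 1) - (a - K) * a * u * u / 2
  - M * powp a q * powp u (q + 1) / (q + 1).

Lemma lyap_sub_derivative N p M x y t :
  1 < p -> solS N p M x y -> 0 <= x t -> 0 <= y t ->
  let a := 2 / (p - 1) in let K := Kc N p in let q := 2 * p / (p + 1) in
  derivable_pt_lim (fun s => lyap_sub a K M p q (x s) (y s)) t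
    ((y t - a * x t) * - ((a - K) * (y t - a * x t) + M * (powp (y t) q - powp (a * x t) q))).
Proof.
  intros hp hsol hx hy a K q; destruct (hsol t) as [dx dy].
  assert (ha : 0 < a) by (unfold a; apply Rdiv_lt_0_compat; lra).
  assert (hq : 1 < q) by (unfold q; apply (Rmult_lt_reg_r (p + 1)); [lra | field_simplify; lra]).
  unfold lyap_sub; eapply derivable_pt_lim_eq_value; [derive |].
  unfold fS1, fS2; rewrite !Rabs_pos_eq by lra; fold a K q.
  assert (hxq : powp (a * x t) q = powp a q * (powp (x t) (q - 1) * x t)).
  { rewrite <- powp_succ by lra; replace (q - 1 + 1) with q by ring.
    symmetry; apply powp_mul; lra. }
  replace (p + 1 - 1) with (p - 1 + 1) by ring.
  replace (q + 1 - 1) with (q - 1 + 1) by ring.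
  rewrite hxq, !powp_succ by lra.
  field; lra.
Qed.

Lemma mul_sub_powp_pos c M q v w :
  0 <= c -> 0 < M -> 0 < q -> 0 <= v -> 0 <= w -> v <> w ->
  0 < (v - w) * (c * (v - w) + M * (powp v q - powp w q)).
Proof.
  intros hc hM hq hv hw hvw.
  assert (0 <= c * ((v - w) * (v - w))) by (apply Rmult_le_pos; nra).
  destruct (Rlt_or_le v w) as [hlt | hle].
  - pose proof (powp_lt v w q hq (conj hv hlt)).
    assert (0 < (w - v) * (M * (powp w q - powp v q)))
      by (repeat apply Rmult_lt_0_compat; lra).
    replace ((v - w) * (c * (v - w) + M * (powp v q - powp w q)))
      with (c * ((v - w) * (v - w)) + (w - v) * (M * (powp w q - powp v q))) by ring.
    lra.
  - destruct hle as [hlt | <-]; [| congruence].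
    pose proof (powp_lt w v q hq (conj hw hlt)).
    assert (0 < (v - w) * (M * (powp v q - powp w q)))
      by (repeat apply Rmult_lt_0_compat; lra).
    replace ((v - w) * (c * (v - w) + M * (powp v q - powp w q)))
      with (c * ((v - w) * (v - w)) + (v - w) * (M * (powp v q - powp w q))) by ring.
    lra.
Qed.

Lemma no_periodic_orbit_closed_quadrant N p M x y :
  2 < N -> 0 < M -> 1 < p -> p <= (N + 2) / (N - 2) ->
  periodic_orbit N p M x y -> ~ (forall t, 0 <= x t /\ 0 <= y t).
Proof.
  intros hN hM hp hpN horb hquad.
  set (a := 2 / (p - 1)); set (K := Kc N p); set (q := 2 * p / (p + 1)).
  assert (ha : 0 < a) by (unfold a; apply Rdiv_lt_0_compat; lra).
  assert (hq : 0 < q) by (unfold q; apply Rdiv_lt_0_compat; lra).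
  assert (haK : 0 <= a - K).
  { assert ((N - 2) * p <= N + 2).
    { replace (N + 2) with ((N + 2) / (N - 2) * (N - 2)) by (field; lra).
      rewrite Rmult_comm; apply Rmult_le_compat_r; lra. }
    unfold a, K, Kc; replace (2 / (p - 1) - ((N - 2) * p - N) / (p - 1))
      with ((N + 2 - (N - 2) * p) / (p - 1)) by (field; lra).
    apply Rmult_le_pos; [lra | left; apply Rinv_0_lt_compat; lra]. }
  apply (periodic_orbit_no_strict_lyapunov N p M x y (lyap_sub a K M p q)
           (fun t => - ((a - K) * (y t - a * x t) + M * (powp (y t) q - powp (a * x t) q))))
    ; [exact horb | |].
  - intro t; destruct (hquad t); now apply lyap_sub_derivative; [| apply horb | |].
  - intros t hoff; destruct (hquad t); fold a in hoff |- *.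
    pose proof (mul_sub_powp_pos (a - K) M q (y t) (a * x t) haK hM hq
                  ltac:(lra) ltac:(nra) hoff).
    rewrite <- Ropp_mult_distr_r; lra.
Qed.

Definition kappa (al b p : R) : R :=
  Rpower (al / (p / (p + 1))) (p / (p + 1)) * Rpower (b / (1 - p / (p + 1))) (1 - p / (p + 1)).

Section Supercritical.

Variables a K M b al p q : R.
Hypothesis ha : 0 < a.
Hypothesis hb : 0 < b < 1.
Hypothesis hal : 0 < al.
Hypothesis hp : 1 < p.
Hypothesis hq : q = 2 * p / (p + 1).

(* [u^al * int_{a u}^{v} s^(-b) (s - a u) ds], plus a function of [u] alone. *)
Definition lyap_super (u v : R) : R :=
  Rpower u al * ((Rpower v (2 - b) - Rpower (a * u) (2 - b)) / (2 - b)
                 - a * u * (Rpower v (1 - b) - Rpower (a * u) (1 - b)) / (1 - b))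
  + Rpower a (- b) * (- K * a * Rpower u (al - b + 2) / (al - b + 2)
                      + Rpower u (al - b + p + 1) / (al - b + p + 1)
                      + M * Rpower a q * Rpower u (al - b + q + 1) / (al - b + q + 1)).

Definition J (u s : R) : R :=
  Rpower u al * (- al * (Rpower s (2 - b) - Rpower (a * u) (2 - b)) / ((2 - b) * u)
                 + Rpower u p * (Rpower s (- b) - Rpower (a * u) (- b))
                 + M * (Rpower s (q - b) - Rpower (a * u) (q - b))).

Definition D (u s : R) : R :=
  - al * s / u - b * Rpower u p / s + M * (q - b) * Rpower s (q - 1).

Lemma J_nullcline u : J u (a * u) = 0.
Proof. unfold J; rewrite !Rminus_diag; unfold Rdiv; ring. Qed.

Lemma J_derivative u s : 0 < u -> 0 < s ->
  derivable_pt_lim (fun s => J u s) s (Rpower u al * Rpower s (- b) * D u s).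
Proof.
  intros hu hs; unfold J, D.
  eapply derivable_pt_lim_eq_value; [derive |].
  rpower_normalize; field_rpower.
Qed.

Hypothesis hK : K = (al + 1) * a / (1 - b).

Lemma lyap_super_derivative x y t : 0 < x t -> 0 < y t ->
  derivable_pt_lim x t (a * x t - y t) ->
  derivable_pt_lim y t (- K * y t + Rpower (x t) (p - 1) * x t + M * Rpower (y t) q) ->
  derivable_pt_lim (fun s => lyap_super (x s) (y s)) t ((y t - a * x t) * J (x t) (y t)).
Proof.
  intros hx hy dx dy; unfold lyap_super, J.
  assert (0 < q) by (rewrite hq; apply Rdiv_lt_0_compat; lra).
  eapply derivable_pt_lim_eq_value; [derive |].
  rewrite hK; rpower_normalize; field_rpower.
Qed.

Let w := p / (p + 1).

Let w_bounds : 0 < w < 1.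
Proof.
  unfold w; split; [apply Rdiv_lt_0_compat; lra |].
  apply (Rmult_lt_reg_r (p + 1)); [lra | field_simplify; lra].
Qed.

Let U u s := al / w * (s / u).
Let V u s := b / (1 - w) * (Rpower u p / s).

Let UV_pos u s : 0 < u -> 0 < s -> 0 < U u s /\ 0 < V u s.
Proof.
  intros hu hs; pose proof w_bounds; unfold U, V; unfold Rdiv; split;
    repeat first [apply Rmult_lt_0_compat | apply Rinv_0_lt_compat | apply Rpower_pos | lra].
Qed.

(* With the weight [w = p/(p+1)], the weighted geometric mean of the two terms
   [al s / u] and [b u^p / s] of [D] no longer depends on [u]. *)
Let D_geometric_mean u s : 0 < u -> 0 < s ->
  Rpower (U u s) w * Rpower (V u s) (1 - w) = kappa al b p * Rpower s (q - 1).
Proof.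
  intros hu hs; pose proof w_bounds.
  assert (0 < al / w) by (apply Rdiv_lt_0_compat; lra).
  assert (0 < b / (1 - w)) by (apply Rdiv_lt_0_compat; lra).
  unfold kappa, U, V; fold w; unfold Rpower; rewrite <- !exp_plus; f_equal.
  unfold Rdiv at 2 4; rewrite !ln_mult, !ln_Rinv, ln_exp
    by (try apply Rmult_lt_0_compat; try apply Rinv_0_lt_compat; try apply exp_pos; lra).
  rewrite hq; unfold w; field; lra.
Qed.

Let D_as_amgm_gap u s : 0 < u -> 0 < s ->
  D u s = M * (q - b) * Rpower s (q - 1) - (w * U u s + (1 - w) * V u s).
Proof. intros hu hs; unfold D, U, V, w; field; lra. Qed.

Hypothesis hM : M * (q - b) <= kappa al b p.

Lemma D_nonpos u s : 0 < u -> 0 < s -> D u s <= 0.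
Proof.
  intros hu hs; destruct (UV_pos u s hu hs) as [hU hV].
  pose proof (weighted_amgm w (U u s) (V u s) w_bounds hU hV) as hamgm.
  rewrite D_geometric_mean in hamgm by assumption.
  pose proof (Rmult_le_compat_r _ _ _ (Rlt_le _ _ (Rpower_pos s (q - 1))) hM).
  rewrite D_as_amgm_gap by assumption; lra.
Qed.

Lemma D_eq0_unique u s1 s2 : 0 < u -> 0 < s1 -> 0 < s2 ->
  D u s1 = 0 -> D u s2 = 0 -> s1 = s2.
Proof.
  intros hu hs1 hs2.
  (* a zero of [D] is an equality case of AM-GM, i.e. [U = V], i.e. [s^2 = c u^(p+1)] *)
  assert (hsq : forall s, 0 < s -> D u s = 0 -> s * s = b * w * Rpower u p * u / ((1 - w) * al)).
  { intros s hs hD; pose proof w_bounds; destruct (UV_pos u s hu hs) as [hU hV].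
    destruct (Req_dec (U u s) (V u s)) as [hUV | hUV].
    - unfold U, V in hUV; apply (Rmult_eq_compat_l (w * s * u / al)) in hUV.
      replace (w * s * u / al * (al / w * (s / u))) with (s * s) in hUV by (field; lra).
      rewrite hUV; field; lra.
    - pose proof (weighted_amgm_lt w (U u s) (V u s) w_bounds hU hV hUV) as hamgm.
      rewrite D_geometric_mean in hamgm by assumption.
      pose proof (Rmult_le_compat_r _ _ _ (Rlt_le _ _ (Rpower_pos s (q - 1))) hM).
      rewrite D_as_amgm_gap in hD by assumption; lra. }
  intros h1 h2; pose proof (hsq s1 hs1 h1); pose proof (hsq s2 hs2 h2); nra.
Qed.

Lemma J_decreasing u lo hi : 0 < u -> 0 < lo -> lo < hi -> J u hi < J u lo.
Proof.
  intros hu hlo hlh.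
  assert (hfac : forall s, 0 < s -> 0 < Rpower u al * Rpower s (- b))
    by (intros; apply Rmult_lt_0_compat; apply Rpower_pos).
  apply (strictly_decreasing_of_derivative _ (fun s => Rpower u al * Rpower s (- b) * D u s));
    [exact hlh | intros s hs; apply J_derivative; lra | |].
  - intros s hs; pose proof (hfac s ltac:(lra)); pose proof (D_nonpos u s hu ltac:(lra)); nra.
  - intros s1 s2 hs1 hs2 h1 h2.
    apply Rmult_integral in h1; apply Rmult_integral in h2.
    pose proof (hfac s1 ltac:(lra)); pose proof (hfac s2 ltac:(lra)).
    apply (D_eq0_unique u); lra.
Qed.

Lemma nullcline_sign u s : 0 < u -> 0 < s -> s <> a * u -> (s - a * u) * J u s < 0.
Proof.
  intros hu hs hsau; pose proof (J_nullcline u).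
  destruct (Rlt_or_le s (a * u)) as [hlt | hle].
  - pose proof (J_decreasing u s (a * u) hu hs hlt); nra.
  - destruct hle as [hlt | heq]; [| now exfalso; apply hsau].
    pose proof (J_decreasing u (a * u) s hu ltac:(nra) hlt); nra.
Qed.

End Supercritical.

(* [b] is chosen so that the constraint [M (q - b) <= kappa] becomes exactly [M <= Mbar]. *)
Definition lyap_b (n p : R) : R := 2 * ((n - 2) * p - n - 2) / ((n - 2) * (p - 1) * (p + 1)).
Definition lyap_al (n p : R) : R := (1 - lyap_b n p) * Kc n p / (2 / (p - 1)) - 1.

Lemma supercritical_gap n p : 2 < n -> (n + 2) / (n - 2) < p -> n + 2 < (n - 2) * p.
Proof.
  intros hn hpn; replace (n + 2) with ((n + 2) / (n - 2) * (n - 2)) by (field; lra).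
  rewrite (Rmult_comm (n - 2)); apply Rmult_lt_compat_r; lra.
Qed.

Lemma lyap_parameters_pos n p : 2 < n -> (n + 2) / (n - 2) < p ->
  1 < p /\ 0 < lyap_b n p < 1 /\ 0 < lyap_al n p.
Proof.
  intros hn hpn.
  pose proof (supercritical_gap n p hn hpn) as hE.
  assert (hp : 1 < p) by nra.
  assert (hden : 0 < (n - 2) * (p - 1) * (p + 1)) by (repeat apply Rmult_lt_0_compat; lra).
  assert (hb1 : 1 - lyap_b n p = ((n - 2) * (p - 1) ^ 2 + 8) / ((n - 2) * (p - 1) * (p + 1)))
    by (unfold lyap_b; field; repeat split; lra).
  assert (hal : lyap_al n p
                = ((n - 2) * (p - 1) ^ 2 + 4) * ((n - 2) * p - n - 2)
                  / (2 * ((n - 2) * (p - 1) * (p + 1))))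
    by (unfold lyap_al, lyap_b, Kc; field; repeat split; lra).
  assert (hF : 0 < (n - 2) * (p - 1) ^ 2 + 4) by (pose proof (pow2_ge_0 (p - 1)); nra).
  repeat split; [exact hp | | |].
  - unfold lyap_b; apply Rdiv_lt_0_compat; lra.
  - enough (0 < 1 - lyap_b n p) by lra.
    rewrite hb1; apply Rdiv_lt_0_compat; nra.
  - rewrite hal; apply Rdiv_lt_0_compat; [apply Rmult_lt_0_compat |]; lra.
Qed.

Lemma Mbar_mul_eq_kappa n p : 2 < n -> (n + 2) / (n - 2) < p ->
  Mbar n p * (2 * p / (p + 1) - lyap_b n p) = kappa (lyap_al n p) (lyap_b n p) p.
Proof.
  intros hn hpn; destruct (lyap_parameters_pos n p hn hpn) as [hp _].
  pose proof (supercritical_gap n p hn hpn) as hE.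
  set (E := (n - 2) * p - n - 2); set (F := (n - 2) * (p - 1) ^ 2 + 4).
  assert (hF : 0 < F) by (unfold F; pose proof (pow2_ge_0 (p - 1)); nra).
  set (w := p / (p + 1)); set (c := E / ((n - 2) * (p - 1))).
  assert (hw : 0 < w) by (unfold w; apply Rdiv_lt_0_compat; lra).
  assert (hc : 0 < c) by (unfold c, E; apply Rdiv_lt_0_compat; [lra | nra]).
  assert (hbw : lyap_b n p / (1 - w) = 2 * c)
    by (unfold lyap_b, c, w, E; field; repeat split; lra).
  assert (halw : lyap_al n p / w = F / (4 * p) * (2 * c))
    by (unfold lyap_al, lyap_b, Kc, c, w, E, F; field; repeat split; lra).
  assert (hqb : 2 * p / (p + 1) - lyap_b n p = 2 * F / ((n - 2) * (p - 1) * (p + 1)))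
    by (unfold lyap_b, F; field; repeat split; lra).
  assert (hFsplit : F = Rpower F (1 / (p + 1)) * (Rpower (F / (4 * p)) w * Rpower (4 * p) w)).
  { rewrite Rpower_mult_distr by (try apply Rdiv_lt_0_compat; lra).
    replace (F / (4 * p) * (4 * p)) with F by (field; lra).
    rewrite <- Rpower_plus; replace (1 / (p + 1) + w) with 1 by (unfold w; field; lra).
    now rewrite Rpower_1. }
  unfold kappa, Mbar; fold w; rewrite halw, hbw, hqb.
  rewrite <- Rpower_mult_distr, (Rmult_assoc (Rpower (F / (4 * p)) w)), <- Rpower_plus
    by (try apply Rdiv_lt_0_compat; lra).
  replace (w + (1 - w)) with 1 by ring; rewrite Rpower_1 by lra.
  fold E F; rewrite !powp_pos by lra; unfold c; clearbody E F.
  rewrite hFsplit at 2; field; repeat split; try (apply Rgt_not_eq, Rpower_pos); lra.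
Qed.

Lemma no_periodic_orbit_open_quadrant n p M x y :
  2 < n -> (n + 2) / (n - 2) < p -> 0 < M -> M <= Mbar n p ->
  periodic_orbit n p M x y -> ~ (forall t, 0 < x t /\ 0 < y t).
Proof.
  intros hn hpn hM hMbar horb hquad.
  destruct (lyap_parameters_pos n p hn hpn) as [hp [hb hal]].
  pose proof (Mbar_mul_eq_kappa n p hn hpn) as hkappa.
  set (a := 2 / (p - 1)); set (K := Kc n p); set (q := 2 * p / (p + 1)) in *.
  set (b := lyap_b n p) in *; set (al := lyap_al n p) in *.
  assert (ha : 0 < a) by (unfold a; apply Rdiv_lt_0_compat; lra).
  assert (hq : 1 < q) by (unfold q; apply (Rmult_lt_reg_r (p + 1)); [lra | field_simplify; lra]).
  assert (hK : K = (al + 1) * a / (1 - b)) by (unfold al, lyap_al; fold b K a; field; lra).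
  assert (hMk : M * (q - b) <= kappa al b p)
    by (rewrite <- hkappa; apply Rmult_le_compat_r; lra).
  apply (periodic_orbit_no_strict_lyapunov n p M x y (lyap_super a K M b al p q)
           (fun t => J a M b al p q (x t) (y t)) horb).
  - intro t; destruct (hquad t) as [hx hy]; destruct (proj1 horb t) as [dx dy].
    apply (lyap_super_derivative a K M b al p q ha hb hal hp eq_refl hK x y t hx hy).
    + eapply derivable_pt_lim_eq_value; [exact dx | unfold fS1; fold a; ring].
    + eapply derivable_pt_lim_eq_value; [exact dy |].
      unfold fS2; rewrite !Rabs_pos_eq, !powp_pos by lra; reflexivity.
  - intros t hoff; destruct (hquad t); now apply nullcline_sign.
Qed.

Theorem lemma3p2 (N : nat) (HN : (3 <= N)%nat) :
  (forall p M : R, 0 < M -> 1 < p -> p <= (INR N + 2) / (INR N - 2) ->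
     forall x y : R -> R, periodic_orbit (INR N) p M x y ->
     ~ (forall t, 0 <= x t /\ 0 <= y t)) /\
  (forall p M : R, (INR N + 2) / (INR N - 2) < p ->
     0 < M -> M <= Mbar (INR N) p ->
     forall X : R, is_XM (INR N) p M X ->
     forall x y : R -> R, periodic_orbit (INR N) p M x y ->
     (forall t, 0 < x t /\ 0 < y t) ->
     ~ surrounds x y X (2 / (p - 1) * X)).
Proof.
  assert (hN : 2 < INR N) by (apply le_INR in HN; simpl in HN; lra).
  split.
  - intros p M hM hp hpN x y horb.
    exact (no_periodic_orbit_closed_quadrant _ p M x y hN hM hp hpN horb).
  - (* No periodic orbit lies in the open quadrant at all. *)
    intros p M hpN hM hMbar X _ x y horb hquad _.
    exact (no_periodic_orbit_open_quadrant _ p M x y hN hpN hM hMbar horb hquad).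
Qed.
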